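(* The trace of the matrix $X_{\frac{m}{n}}(q)$ has the following expression in terms of the corresponding $q$-rational: $$ \textup{Tr}\left(X_{\frac{m}{n}}(q)\right)=q\,\mathcal{N}_{\frac{m}{n}}(q)^2+\mathcal{D}_{\frac{m}{n}}(q)^2, $$ where $\mathcal{N}_{\frac{m}{n}}(q)$ and $\mathcal{D}_{\frac{m}{n}}(q)$ are the numerator and denominator of the $q$-deformed rational $\left[\frac{m}{n}\right]_q$.
   Context: Let $\frac{m}{n}>1$ be a rational number with continued fraction expansion $\frac{m}{n}=[a_1,a_2,\ldots,a_k]$, $a_i\geq 1$, where $k$ is odd. Let $$ R_q=\begin{pmatrix} q&1\\ 0&1\end{pmatrix},\qquad L_q=\begin{pmatrix} q&0\\ q&1\end{pmatrix},\qquad X_0=\begin{pmatrix}0&0\\0&1\end{pmatrix}. $$ Set $A_q:=R_q^{a_1}L_q^{a_2}R_q^{a_3}L_q^{a_4}\cdots R_q^{a_k}$ and $A_q^T:=L_q^{a_k}R_q^{a_{k-1}}L_q^{a_{k-2}}\cdots L_q^{a_1}$ (the $q$-deformed transpose of $A_q$, not the ordinary transpose), and define $X_{\frac{m}{n}}(q):=A_q\,X_0\,A_q^T$. The $q$-deformed rational is $\left[\frac{m}{n}\right]_q=A_q\left(\frac{0}{1}\right)=\frac{\mathcal{N}_{\frac{m}{n}}(q)}{\mathcal{D}_{\frac{m}{n}}(q)}$ (action by fractional-linear transformations), with $\mathcal{N}_{\frac{m}{n}}$, $\mathcal{D}_{\frac{m}{n}}$ polynomials in $q$; equivalently the second column of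 $A_q$ is $(\mathcal{N}_{\frac{m}{n}}(q),\mathcal{D}_{\frac{m}{n}}(q))^T$ and the second row of $A_q^T$ is $(q\mathcal{N}_{\frac{m}{n}}(q),\mathcal{D}_{\frac{m}{n}}(q))$. *)

From HB Require Import structures.
From mathcomp Require Import all_boot all_order all_algebra.
Set Implicit Arguments. Unset Strict Implicit. Unset Printing Implicit Defensive.
Import Order.TTheory GRing.Theory Num.Theory.
Local Open Scope ring_scope.

Definition mx2 {R : Type} (a b c d : R) : 'M[R]_2 :=
  \matrix_(i < 2, j < 2)
    if (i == 0 :> nat) then (if (j == 0 :> nat) then a else b)
    else (if (j == 0 :> nat) then c else d).

(* q is the formal variable 'X of {poly int} *)
Definition Rq : 'M[{poly int}]_2 := mx2 'X 1 0 1.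
Definition Lq : 'M[{poly int}]_2 := mx2 'X 0 'X 1.
Definition X0 : 'M[{poly int}]_2 := mx2 0 0 0 1.

Fixpoint alt_prod (b : bool) (s : seq nat) : 'M[{poly int}]_2 :=
  match s with
  | [::] => 1
  | a :: s' => (if b then Rq else Lq) ^+ a * alt_prod (~~ b) s'
  end.

Definition Aq (s : seq nat) : 'M[{poly int}]_2 := alt_prod true s.
(* q-deformed transpose A_q^T = L^{ak} R^{a(k-1)} ... L^{a1} (k odd) *)
Definition AqT (s : seq nat) : 'M[{poly int}]_2 := alt_prod false (rev s).

Definition Xq (s : seq nat) : 'M[{poly int}]_2 := Aq s * X0 * AqT s.

Definition qN (s : seq nat) : {poly int} := Aq s 0 1.
Definition qD (s : seq nat) : {poly int} := Aq s 1 1.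

Fixpoint cf_value (s : seq nat) : rat :=
  match s with
  | [::] => 0
  | [:: a] => a%:R
  | a :: s' => a%:R + (cf_value s')^-1
  end.

(** The diagonal matrix [P = diag(1, q)] intertwines the two generators with
    the transposes of each other: [L_q P = P R_q^T] and [R_q P = P L_q^T].
    For [k] odd this turns the q-deformed transpose into a conjugate of the
    ordinary one, [A_q^T P = P (A_q)^T], so the second row of [A_q^T] is
    [(q N, D)].  Since [X_0] only keeps the second column of [A_q] and the
    second row of [A_q^T], the trace of [A_q X_0 A_q^T] is [N (q N) + D D]. *)

From mathcomp Require Import all_boot all_order all_algebra.
Import GRing.Theory Num.Theory.
Set Implicit Arguments.
Unset Strict Implicit.
Local Open Scope ring_scope.

Lemma mx2E (R : Type) (a b c d : R) (i j : 'I_2) :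
  mx2 a b c d i j = if (i == 0 :> nat) then (if (j == 0 :> nat) then a else b)
    else (if (j == 0 :> nat) then c else d).
Proof. by rewrite mxE. Qed.

Lemma mulmx2E (R : pzRingType) (A B : 'M[R]_2) (i j : 'I_2) :
  (A * B) i j = A i 0 * B 0 j + A i 1 * B 1 j.
Proof.
rewrite -mulmxE mxE !big_ord_recl big_ord0 addr0.
by congr (A i _ * B _ j + A i _ * B _ j); apply: val_inj.
Qed.

Lemma mxtrace2 (R : pzRingType) (A : 'M[R]_2) : \tr A = A 0 0 + A 1 1.
Proof.
rewrite /mxtrace !big_ord_recl big_ord0 addr0.
by congr (A _ _ + A _ _); apply: val_inj.
Qed.

Lemma mxtrace_mul_X0 (R : comPzRingType) (A B : 'M[R]_2) :
  \tr (A * mx2 0 0 0 1 * B) = A 0 1 * B 1 0 + A 1 1 * B 1 1.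
Proof.
by rewrite mxtrace2 !mulmx2E !mx2E /= !mulr0 !mulr1 !add0r !mul0r !add0r.
Qed.

Lemma intertwine_trmxX (R : comPzRingType) (n k : nat) (M N P : 'M[R]_n) :
  M * P = P * N^T -> M ^+ k * P = P * (N ^+ k)^T.
Proof.
move=> MP; elim: k => [|k IHk]; first by rewrite !expr0 trmx1 mul1r mulr1.
by rewrite exprSr -mulrA MP mulrA IHk exprS -mulmxE trmx_mul !mulmxE mulrA.
Qed.

Lemma intertwine_diag2_entries (R : idomainType) (q : R) (A B : 'M[R]_2) :
  q != 0 -> B * mx2 1 0 0 q = mx2 1 0 0 q * A^T -> B 1 0 = q * A 0 1 /\ B 1 1 = A 1 1.
Proof.
move=> q_neq0 BP; have entry i j := congr1 (fun M : 'M[R]_2 => M i j) BP.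
move: (entry 1 0) (entry 1 1) => /=; rewrite !mulmx2E !mx2E !mxE /=.
rewrite !mulr1 !mulr0 !mul0r !add0r addr0 [B 1 1 * q]mulrC.
by move=> B10 /(mulfI q_neq0) B11.
Qed.

Definition Pq : 'M[{poly int}]_2 := mx2 1 0 0 'X.

Lemma generator_Pq (b : bool) :
  (if ~~ b then Rq else Lq) * Pq = Pq * (if b then Rq else Lq)^T.
Proof.
apply/matrixP => i j; rewrite !mulmx2E /Rq /Lq /Pq !mxE.
by case: b; case: i => [[|[|//]] ?]; case: j => [[|[|//]] ?];
  rewrite !mx2E /= ?(mulr0, mul0r, mulr1, mul1r, addr0, add0r) // mulrC.
Qed.

Lemma alt_prod_rcons (b : bool) (s : seq nat) (a : nat) :
  alt_prod b (rcons s a) = alt_prod b s * (if odd (size s) (+) b then Rq else Lq) ^+ a.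
Proof.
elim: s b => [|c s IHs] b /=; first by rewrite mulr1 mul1r.
by rewrite IHs mulrA addbN addNb.
Qed.

Lemma alt_prod_rev_Pq (b : bool) (s : seq nat) :
  alt_prod (odd (size s) (+) b) (rev s) * Pq = Pq * (alt_prod b s)^T.
Proof.
elim: s b => [|a s IHs] b /=; first by rewrite trmx1 mul1r mulr1.
rewrite rev_cons alt_prod_rcons size_rev -mulrA.
have -> : odd (size s) (+) (~~ odd (size s) (+) b) = ~~ b by case: odd; case: b.
rewrite (intertwine_trmxX a (generator_Pq b)) mulrA addNb -addbN IHs.
by rewrite -mulrA -mulmxE -trmx_mul.
Qed.

Lemma AqT_Pq (s : seq nat) : odd (size s) -> AqT s * Pq = Pq * (Aq s)^T.
Proof. by move=> odd_s; rewrite /AqT -alt_prod_rev_Pq odd_s. Qed.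

Theorem proposition1 (m n : nat) (a : seq nat) :
  (0 < n)%N ->
  1 < (m%:R / n%:R : rat) ->
  all (fun x => 0 < x)%N a ->
  odd (size a) ->
  cf_value a = m%:R / n%:R ->
  \tr (Xq a) = 'X * (qN a) ^+ 2 + (qD a) ^+ 2.
Proof.
move=> _ _ _ odd_a _.
have X_neq0 : 'X != 0 :> {poly int} by rewrite polyX_eq0.
have [AqT10 AqT11] := intertwine_diag2_entries X_neq0 (AqT_Pq odd_a).
by rewrite /Xq mxtrace_mul_X0 AqT10 AqT11 mulrCA -!expr2.
Qed.
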